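(* Let $A=k[x,y]$, graded by $|x|=|y|=1$. The algebra map $\delta_A:A\to\mathcal{O}_{nc}(\mathrm{GL}_2)\otimes A$ with $\delta_A(x)=a\otimes x+b\otimes y$, $\delta_A(y)=c\otimes x+d\otimes y$ makes $A$ a graded $\mathcal{O}_{nc}(\mathrm{GL}_2)$-comodule algebra, and $(\mathcal{O}_{nc}(\mathrm{GL}_2),\delta_A)$ is the universal coacting Hopf algebra of $A$: for every Hopf algebra $H$ and every algebra map $f:A\to H\otimes A$ making $A$ an $H$-comodule algebra with $f(A_n)\subset H\otimes A_n$ for all $n$, there is a unique Hopf algebra morphism $g:\mathcal{O}_{nc}(\mathrm{GL}_2)\to H$ with $(g\otimes1)\circ\delta_A=f$. (Equivalently $\mathcal{O}_{nc}(\mathrm{GL}_2)$ is the Hopf envelope of Manin's bialgebra $k\langle a,b,c,d\rangle/(ac-ca,\,bd-db,\,ad-cb-da+bc)$.)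
   Context: $k$ a field. $\mathcal{O}_{nc}(\mathrm{GL}_2)$ is the $k$-algebra generated by $a,b,c,d,\delta,\delta^{-1}$ with relations $ac=ca$, $bd=db$, $ad-cb=\delta=da-bc$, $\delta\delta^{-1}=1=\delta^{-1}\delta$, $a\delta^{-1}d-b\delta^{-1}c=1=d\delta^{-1}a-c\delta^{-1}b$, $b\delta^{-1}a=a\delta^{-1}b$, $c\delta^{-1}d=d\delta^{-1}c$, with Hopf structure $\Delta(a)=a\otimes a+b\otimes c$, $\Delta(b)=a\otimes b+b\otimes d$, $\Delta(c)=c\otimes a+d\otimes c$, $\Delta(d)=c\otimes b+d\otimes d$, $\Delta(\delta^{\pm1})=\delta^{\pm1}\otimes\delta^{\pm1}$, $\epsilon(a)=\epsilon(d)=\epsilon(\delta^{\pm1})=1$, $\epsilon(b)=\epsilon(c)=0$, antipode $S(a)=\delta^{-1}d$, $S(b)=-\delta^{-1}b$, $S(c)=-\delta^{-1}c$, $S(d)=\delta^{-1}a$, $S(\delta^{\pm1})=\delta^{\mp1}$. An $H$-comodule algebra is an algebra $A$ with an algebra map $A\to H\otimes A$ that is a left $H$-comodule structure. *)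

From HB Require Import structures.
From mathcomp Require Import all_boot all_algebra.
From mathcomp Require Import mpoly.
From Stdlib Require Import ClassicalEpsilon.

Set Implicit Arguments.
Unset Strict Implicit.
Unset Printing Implicit Defensive.

Import GRing.Theory.
Local Open Scope ring_scope.

Section HopfDefs.
Variable k : fieldType.

Definition lin (V U : lmodType k) (l : V -> U) : Prop :=
  forall (a : k) (x y : V), l (a *: x + y) = a *: l x + l y.

Definition bilin (V W U : lmodType k) (b : V -> W -> U) : Prop :=
  (forall w, lin (fun v => b v w)) /\ (forall v, lin (b v)).

Definition trilin (V1 V2 V3 U : lmodType k) (t : V1 -> V2 -> V3 -> U) : Prop :=
  [/\ forall y z, lin (fun x => t x y z),
      forall x z, lin (fun y => t x y z) &
      forall x y, lin (t x y)].

Record tensor (V W : lmodType k) := Tensor {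
  tcar :> lmodType k;
  tmul : V -> W -> tcar;
  tmul_bilin : bilin tmul;
  tmul_univ : forall (U : lmodType k) (b : V -> W -> U), bilin b ->
    exists l : tcar -> U, lin l /\ forall v w, l (tmul v w) = b v w;
  tmul_uniq : forall (U : lmodType k) (l1 l2 : tcar -> U), lin l1 -> lin l2 ->
    (forall v w, l1 (tmul v w) = l2 (tmul v w)) -> forall t, l1 t = l2 t }.

Record atensor (V W : algType k) := ATensor {
  acar :> algType k;
  amul : V -> W -> acar;
  amul_bilin : bilin amul;
  amul_univ : forall (U : lmodType k) (b : V -> W -> U), bilin b ->
    exists l : acar -> U, lin l /\ forall v w, l (amul v w) = b v w;
  amul_uniq : forall (U : lmodType k) (l1 l2 : acar -> U), lin l1 -> lin l2 ->
    (forall v w, l1 (amul v w) = l2 (amul v w)) -> forall t, l1 t = l2 t;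
  amulM : forall v v' w w', amul (v * v') (w * w') = amul v w * amul v' w';
  amul1 : amul 1 1 = 1 }.

Definition atensor_tensor (V W : algType k) (X : atensor V W) : tensor V W :=
  @Tensor V W (acar X) (@amul V W X) (amul_bilin X) (@amul_univ V W X) (@amul_uniq V W X).
Coercion atensor_tensor : atensor >-> tensor.

Record tensor3 (V1 V2 V3 : lmodType k) := Tensor3 {
  t3car :> lmodType k;
  tmul3 : V1 -> V2 -> V3 -> t3car;
  tmul3_trilin : trilin tmul3;
  tmul3_univ : forall (U : lmodType k) (t : V1 -> V2 -> V3 -> U), trilin t ->
    exists l : t3car -> U, lin l /\ forall x y z, l (tmul3 x y z) = t x y z;
  tmul3_uniq : forall (U : lmodType k) (l1 l2 : t3car -> U), lin l1 -> lin l2 ->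
    (forall x y z, l1 (tmul3 x y z) = l2 (tmul3 x y z)) -> forall t, l1 t = l2 t }.

(* the linear map V ⊗ W -> U induced by a bilinear map b (chosen by the
   universal property; junk if b is not bilinear) *)
Definition tlift (V W : lmodType k) (T : tensor V W) (U : lmodType k)
  (b : V -> W -> U) : T -> U :=
  epsilon (inhabits (fun _ : T => (0 : U)))
    (fun l : T -> U => lin l /\ forall v w, l (tmul T v w) = b v w).

Arguments tlift {V W} T {U} b _.

Definition tmap (V W V' W' : lmodType k) (T1 : tensor V W) (T2 : tensor V' W')
  (f : V -> V') (g : W -> W') : T1 -> T2 :=
  tlift T1 (fun v w => tmul T2 (f v) (g w)).

Arguments tmap {V W V' W'} T1 T2 f g _.

(* (D ⊗ 1) : V ⊗ W -> V ⊗ V ⊗ W *)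
Definition coL (V W : lmodType k) (T : tensor V W) (T12 : tensor V V)
  (T3 : tensor3 V V W) (D : V -> T12) : T -> T3 :=
  tlift T (fun v w => tlift T12 (fun u u' => tmul3 T3 u u' w) (D v)).

(* (1 ⊗ f) : V ⊗ W -> V ⊗ V ⊗ W, for f : W -> V ⊗ W *)
Definition coR (V W : lmodType k) (T : tensor V W) (T3 : tensor3 V V W)
  (f : W -> T) : T -> T3 :=
  tlift T (fun v w => tlift T (fun u w' => tmul3 T3 v u w') (f w)).

Arguments coL {V W} T T12 T3 D _.
Arguments coR {V W} T T3 f _.

Definition alg_map (R S : algType k) (f : R -> S) : Prop :=
  [/\ lin f, forall x y, f (x * y) = f x * f y & f 1 = 1].

Record hopf := Hopf {
  hcar :> algType k;
  hHH : atensor hcar hcar;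
  hHHH : tensor3 hcar hcar hcar;
  comul : hcar -> hHH;
  counit : hcar -> k;
  antipode : hcar -> hcar;
  comul_alg : alg_map comul;
  counit_lin : forall (a : k) (x y : hcar), counit (a *: x + y) = a * counit x + counit y;
  counitM : forall x y, counit (x * y) = counit x * counit y;
  counit1 : counit 1 = 1;
  comul_coassoc : forall h,
    coL hHH hHH hHHH comul (comul h) = coR hHH hHHH comul (comul h);
  counitL : forall h, tlift hHH (fun u v => counit u *: v) (comul h) = h;
  counitR : forall h, tlift hHH (fun u v => counit v *: u) (comul h) = h;
  antipode_lin : lin antipode;
  antipodeL : forall h, tlift hHH (fun u v => antipode u * v) (comul h) = (counit h)%:A;
  antipodeR : forall h, tlift hHH (fun u v => u * antipode v) (comul h) = (counit h)%:A }.

Definition hopf_morph (H1 H2 : hopf) (g : H1 -> H2) : Prop :=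
  [/\ alg_map g,
      forall h, comul (g h) = tmap (hHH H1) (hHH H2) g g (comul h),
      forall h, counit (g h) = counit h &
      forall h, antipode (g h) = g (antipode h)].

Definition comod_alg (H : hopf) (A : algType k) (HA : atensor H A)
  (HHA : tensor3 H H A) (f : A -> HA) : Prop :=
  [/\ alg_map f,
      forall x, coL HA (hHH H) HHA (@comul H) (f x) = coR HA HHA f (f x) &
      forall x, tlift HA (fun h y => counit h *: y) (f x) = x].

Definition Apoly := {mpoly k[2]}.
Definition xA : Apoly := 'X_(@Ordinal 2 0 isT).
Definition yA : Apoly := 'X_(@Ordinal 2 1 isT).

Definition graded_coaction (H : algType k) (HA : atensor H Apoly) (f : Apoly -> HA) : Prop :=
  forall (n : nat) (p : Apoly), p \is n.-homog ->
    exists s : seq (H * Apoly),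
      all (fun hp => hp.2 \is n.-homog) s /\ f p = \sum_(hp <- s) amul HA hp.1 hp.2.

Definition onc_rel (R : algType k) (a b c d e e' : R) : Prop :=
  [/\ a * c = c * a /\ b * d = d * b,
      a * d - c * b = e /\ d * a - b * c = e,
      e * e' = 1 /\ e' * e = 1,
      a * e' * d - b * e' * c = 1 /\ d * e' * a - c * e' * b = 1 &
      b * e' * a = a * e' * b /\ c * e' * d = d * e' * c].

Definition presents (O : algType k) (a b c d e e' : O) : Prop :=
  onc_rel a b c d e e' /\
  forall (R : algType k) (a1 b1 c1 d1 e1 e1' : R), onc_rel a1 b1 c1 d1 e1 e1' ->
    (exists phi : O -> R, alg_map phi /\
        [/\ phi a = a1, phi b = b1, phi c = c1, phi d = d1 & phi e = e1 /\ phi e' = e1']) /\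
    (forall phi1 phi2 : O -> R, alg_map phi1 -> alg_map phi2 ->
        [/\ phi1 a = phi2 a, phi1 b = phi2 b, phi1 c = phi2 c, phi1 d = phi2 d &
            phi1 e = phi2 e /\ phi1 e' = phi2 e'] ->
        forall o, phi1 o = phi2 o).

Definition onc_hopf_data (O : hopf) (a b c d e e' : O) : Prop :=
  let t := amul (hHH O) in
  [/\ [/\ comul a = t a a + t b c, comul b = t a b + t b d,
          comul c = t c a + t d c, comul d = t c b + t d d
          & comul e = t e e /\ comul e' = t e' e'],
      [/\ counit a = 1, counit d = 1, counit e = 1, counit e' = 1 &
          counit b = 0 /\ counit c = 0] &
      [/\ antipode a = e' * d, antipode b = - (e' * b), antipode c = - (e' * c),
          antipode d = e' * a & antipode e = e' /\ antipode e' = e]].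

End HopfDefs.

Arguments tlift {k V W} T {U} b _.
Arguments tmap {k V W V' W'} T1 T2 f g _.
Arguments coL {k V W} T T12 T3 D _.
Arguments coR {k V W} T T3 f _.

(* The coaction exists because [a (x) x + b (x) y] and [c (x) x + d (x) y]
   commute exactly when [ac = ca], [bd = db] and [ad + bc = cb + da].
   Coassociativity only has to be checked on x and y: embedding
   H (x) H (x) k[x,y] linearly into the algebra (H (x) H)[x,y] turns both sides
   into algebra maps out of k[x,y].
   Conversely, a graded coaction f of a Hopf algebra H is given on degree 1 by a
   matrix [[a1, b1]; [c1, d1]] over H; comparing coefficients in coassociativity,
   in the counit axiom and in f(xy) = f(yx) shows that this matrix is
   multiplicative and satisfies Manin's relations. Its quantum determinant D is
   then grouplike, hence invertible, and the antipode axioms force S(a1) = S(D) d1,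
   etc., which yields the remaining relations of O_nc(GL_2). The induced algebra
   map is a bialgebra map since both sides agree on generators, and bialgebra
   maps between Hopf algebras commute with the antipodes. *)

From HB Require Import structures.
From mathcomp Require Import all_boot all_algebra.
From mathcomp Require Import mpoly ssrcomplements.
From Stdlib Require Import ClassicalEpsilon.
Set Implicit Arguments.
Unset Strict Implicit.
Unset Printing Implicit Defensive.
Import GRing.Theory.
Local Open Scope ring_scope.

(** * Linear maps and tensor products *)

Section LinearMap.
Variables (k : fieldType) (V U : lmodType k) (l : V -> U) (Hl : lin l).

Lemma lin0 : l 0 = 0.
Proof. by have := Hl (-1) 0 0; rewrite scaler0 addr0 scaleN1r addNr. Qed.
Lemma linD x y : l (x + y) = l x + l y.
Proof. by have := Hl 1 x y; rewrite !scale1r. Qed.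
Lemma linZ a x : l (a *: x) = a *: l x.
Proof. by have := Hl a x 0; rewrite !addr0 lin0 addr0. Qed.
Lemma linN x : l (- x) = - l x.
Proof. by rewrite -scaleN1r linZ scaleN1r. Qed.
Lemma linB x y : l (x - y) = l x - l y.
Proof. by rewrite linD linN. Qed.
Lemma lin_sum I (r : seq I) (P : pred I) (F : I -> V) :
  l (\sum_(i <- r | P i) F i) = \sum_(i <- r | P i) l (F i).
Proof. exact: (big_morph l linD lin0). Qed.
End LinearMap.

Definition tlift3 (k : fieldType) (V1 V2 V3 : lmodType k) (T : tensor3 V1 V2 V3) (U : lmodType k)
  (t : V1 -> V2 -> V3 -> U) : T -> U :=
  epsilon (inhabits (fun _ : T => (0 : U)))
    (fun l : T -> U => lin l /\ forall x y z, l (tmul3 T x y z) = t x y z).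
Arguments tlift3 {k V1 V2 V3} T {U} t _.

Section Tensors.
Variable k : fieldType.

Lemma lin_comp (V W U : lmodType k) (f : V -> W) (g : W -> U) :
  lin f -> lin g -> lin (fun x => g (f x)).
Proof. by move=> Hf Hg a x y; rewrite Hf Hg. Qed.

Lemma lin_id (V : lmodType k) : lin (fun x : V => x).
Proof. by []. Qed.

Lemma lin_scale (V : lmodType k) (c : k) : lin (fun v : V => c *: v).
Proof. by move=> a u v; rewrite scalerDr !scalerA mulrC. Qed.

Lemma lin_mulr (A : algType k) (z : A) : lin (fun x : A => x * z).
Proof. by move=> a x y; rewrite mulrDl scalerAl. Qed.

Lemma lin_mull (A : algType k) (z : A) : lin (fun x : A => z * x).
Proof. by move=> a x y; rewrite mulrDr scalerAr. Qed.

Section Tensor.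
Variables (V W : lmodType k) (T : tensor V W).

Lemma tlift_spec (U : lmodType k) (b : V -> W -> U) : bilin b ->
  lin (tlift T b) /\ forall v w, tlift T b (tmul T v w) = b v w.
Proof.
move=> Hb; rewrite /tlift; apply epsilon_spec.
by have [l Hl] := tmul_univ T Hb; exists l.
Qed.

Lemma tlift_lin (U : lmodType k) (b : V -> W -> U) : bilin b -> lin (tlift T b).
Proof. by case/tlift_spec. Qed.

Lemma tliftE (U : lmodType k) (b : V -> W -> U) : bilin b ->
  forall v w, tlift T b (tmul T v w) = b v w.
Proof. by case/tlift_spec. Qed.

Lemma tensor_ext (U : lmodType k) (l1 l2 : T -> U) : lin l1 -> lin l2 ->
  (forall v w, l1 (tmul T v w) = l2 (tmul T v w)) -> forall t, l1 t = l2 t.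
Proof. exact: tmul_uniq. Qed.

Lemma tlift_lin_param (P U : lmodType k) (b : P -> V -> W -> U) :
  (forall p, bilin (b p)) -> (forall v w, lin (fun p => b p v w)) ->
  forall t, lin (fun p => tlift T (b p) t).
Proof.
move=> Hb Hp t a p p'; move: t; apply: tensor_ext.
- exact: tlift_lin.
- move=> a' x y; rewrite !(linD (tlift_lin (Hb _))) !(linZ (tlift_lin (Hb _))).
  by rewrite !scalerDr !scalerA [a' * a]mulrC addrACA.
- by move=> v w; rewrite !tliftE // Hp.
Qed.
End Tensor.

Section Tensor3.
Variables (V1 V2 V3 : lmodType k) (T : tensor3 V1 V2 V3).

Lemma tlift3_spec (U : lmodType k) (t : V1 -> V2 -> V3 -> U) : trilin t ->
  lin (tlift3 T t) /\ forall x y z, tlift3 T t (tmul3 T x y z) = t x y z.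
Proof.
move=> Ht; rewrite /tlift3; apply epsilon_spec.
by have [l Hl] := tmul3_univ T Ht; exists l.
Qed.

Lemma tlift3_lin (U : lmodType k) (t : V1 -> V2 -> V3 -> U) : trilin t -> lin (tlift3 T t).
Proof. by case/tlift3_spec. Qed.

Lemma tlift3E (U : lmodType k) (t : V1 -> V2 -> V3 -> U) : trilin t ->
  forall x y z, tlift3 T t (tmul3 T x y z) = t x y z.
Proof. by case/tlift3_spec. Qed.

Lemma tmul3_bilin12 z : bilin (fun x y => tmul3 T x y z).
Proof. by case: (tmul3_trilin T) => H1 H2 _; split=> ?; [exact: H1 | exact: H2]. Qed.

Lemma tmul3_bilin23 x : bilin (fun y z => tmul3 T x y z).
Proof. by case: (tmul3_trilin T) => _ H2 H3; split=> ?; [exact: H2 | exact: H3]. Qed.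
End Tensor3.
End Tensors.
Arguments tlift_lin {k V W} T {U b} _.
Arguments tliftE {k V W} T {U b} _ v w.
Arguments tensor_ext {k V W} T {U l1 l2} _ _ _ t.
Arguments tlift3_lin {k V1 V2 V3} T {U t} _.
Arguments tlift3E {k V1 V2 V3} T {U t} _ x y z.

Section CoactionMaps.
Variables (k : fieldType) (V W : lmodType k).
Variables (T : tensor V W) (T12 : tensor V V) (T3 : tensor3 V V W).

Lemma coL_bilin (D : V -> T12) : lin D ->
  bilin (fun v w => tlift T12 (fun u u' => tmul3 T3 u u' w) (D v)).
Proof.
move=> HD; split=> [w|v].
- exact: (lin_comp HD (tlift_lin _ (tmul3_bilin12 T3 w))).
- apply: (tlift_lin_param (b := fun w u u' => tmul3 T3 u u' w)) => [w|u u'].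
  + exact: tmul3_bilin12.
  + by case: (tmul3_trilin T3).
Qed.

Lemma coR_bilin (f : W -> T) : lin f ->
  bilin (fun v w => tlift T (fun u w' => tmul3 T3 v u w') (f w)).
Proof.
move=> Hf; split=> [w|v].
- apply: (tlift_lin_param (b := fun v u w' => tmul3 T3 v u w')) => [v|u w'].
  + exact: tmul3_bilin23.
  + by case: (tmul3_trilin T3).
- exact: (lin_comp Hf (tlift_lin _ (tmul3_bilin23 T3 v))).
Qed.

Lemma coL_lin (D : V -> T12) : lin D -> lin (coL T T12 T3 D).
Proof. by move=> HD; exact: (tlift_lin _ (coL_bilin HD)). Qed.

Lemma coLE (D : V -> T12) : lin D -> forall v w,
  coL T T12 T3 D (tmul T v w) = tlift T12 (fun u u' => tmul3 T3 u u' w) (D v).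
Proof. by move=> HD; exact: (tliftE _ (coL_bilin HD)). Qed.

Lemma coR_lin (f : W -> T) : lin f -> lin (coR T T3 f).
Proof. by move=> Hf; exact: (tlift_lin _ (coR_bilin Hf)). Qed.

Lemma coRE (f : W -> T) : lin f -> forall v w,
  coR T T3 f (tmul T v w) = tlift T (fun u w' => tmul3 T3 v u w') (f w).
Proof. by move=> Hf; exact: (tliftE _ (coR_bilin Hf)). Qed.
End CoactionMaps.
Arguments coL_lin {k V W} T T12 T3 {D} _.
Arguments coLE {k V W} T T12 T3 {D} _ v w.
Arguments coR_lin {k V W} T T3 {f} _.
Arguments coRE {k V W} T T3 {f} _ v w.

Section AlgebraMaps.
Variable k : fieldType.

Lemma alg_map_id (R : algType k) : alg_map (fun x : R => x).
Proof. by []. Qed.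

Lemma alg_map_comp (R S U : algType k) (f : R -> S) (g : S -> U) :
  alg_map f -> alg_map g -> alg_map (fun x => g (f x)).
Proof.
case=> Hf Mf f1 [Hg Mg g1]; split; first exact: lin_comp.
- by move=> x y; rewrite Mf Mg.
- by rewrite f1 g1.
Qed.

Lemma alg_mapX (R S : algType k) (F : R -> S) : alg_map F ->
  forall x n, F (x ^+ n) = F x ^+ n.
Proof. by case=> _ HM H1 x; elim=> [|n IH]; rewrite ?expr0 ?H1 // !exprS HM IH. Qed.

Section AlgebraTensor.
Variables (V W : algType k) (X : atensor V W).

Lemma amul_lin_l w : lin (fun v => amul X v w). Proof. by case: (amul_bilin X). Qed.
Lemma amul_lin_r v : lin (amul X v). Proof. by case: (amul_bilin X). Qed.
Lemma amulDl v v' w : amul X (v + v') w = amul X v w + amul X v' w.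
Proof. exact: (linD (amul_lin_l w)). Qed.
Lemma amulDr v w w' : amul X v (w + w') = amul X v w + amul X v w'.
Proof. exact: (linD (amul_lin_r v)). Qed.
Lemma amulZl a v w : amul X (a *: v) w = a *: amul X v w.
Proof. exact: (linZ (amul_lin_l w)). Qed.
Lemma amulZr a v w : amul X v (a *: w) = a *: amul X v w.
Proof. exact: (linZ (amul_lin_r v)). Qed.
Lemma amulBl v v' w : amul X (v - v') w = amul X v w - amul X v' w.
Proof. exact: (linB (amul_lin_l w)). Qed.
Lemma amulBr v w w' : amul X v (w - w') = amul X v w - amul X v w'.
Proof. exact: (linB (amul_lin_r v)). Qed.

Lemma tliftAE (U : lmodType k) (b : V -> W -> U) : bilin b ->
  forall v w, tlift X b (amul X v w) = b v w.
Proof. exact: (tliftE X). Qed.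

Lemma atensor_ext (U : lmodType k) (l1 l2 : X -> U) : lin l1 -> lin l2 ->
  (forall v w, l1 (amul X v w) = l2 (amul X v w)) -> forall t, l1 t = l2 t.
Proof. exact: (tensor_ext X). Qed.

Lemma lin_multiplicative (U : algType k) (l : X -> U) (b : V -> W -> U) : lin l ->
  (forall v w, l (amul X v w) = b v w) ->
  (forall v v' w w', b (v * v') (w * w') = b v w * b v' w') ->
  forall t t', l (t * t') = l t * l t'.
Proof.
move=> Hl Hlb Hm t t'; move: t; apply: atensor_ext.
- exact: (lin_comp (lin_mulr t') Hl).
- exact: (lin_comp Hl (lin_mulr (l t'))).
move=> v w; move: t'; apply: atensor_ext.
- exact: (lin_comp (lin_mull _) Hl).
- exact: (lin_comp Hl (lin_mull _)).
by move=> v' w'; rewrite -amulM !Hlb Hm.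
Qed.

Lemma tlift_alg (U : algType k) (b : V -> W -> U) : bilin b ->
  (forall v v' w w', b (v * v') (w * w') = b v w * b v' w') -> b 1 1 = 1 ->
  alg_map (tlift X b).
Proof.
move=> Hb Hm H1; have Hl := tlift_lin X Hb; split=> //.
- exact: (lin_multiplicative Hl (tliftAE Hb) Hm).
- by rewrite -amul1 tliftAE.
Qed.
End AlgebraTensor.
End AlgebraMaps.
Arguments atensor_ext {k V W} X {U l1 l2} _ _ _ t.

Lemma tmap_amulE (k : fieldType) (V W V' W' : algType k) (X : atensor V W)
  (Y : atensor V' W') (f : V -> V') (g : W -> W') :
  tmap X Y f g = tlift X (fun v w => amul Y (f v) (g w)).
Proof. by []. Qed.

Section LeftTensorMap.
Variables (k : fieldType) (V V' W : algType k) (X : atensor V W) (Y : atensor V' W).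
Variables (g : V -> V') (Hg : alg_map g).

Lemma tmap_left_bilin : bilin (fun (v : V) (w : W) => amul Y (g v) w).
Proof.
have [gl _ _] := Hg.
by split=> [w|v]; [exact: (lin_comp gl (amul_lin_l Y w)) | exact: amul_lin_r].
Qed.

Lemma tmap_leftE v w : tmap X Y g id (amul X v w) = amul Y (g v) w.
Proof. exact: (tliftAE X tmap_left_bilin). Qed.

Lemma tmap_left_alg : alg_map (tmap X Y g id).
Proof.
have [_ gM g1] := Hg.
rewrite tmap_amulE; apply: tlift_alg; first exact: tmap_left_bilin.
- by move=> v v' w w'; rewrite gM amulM.
- by rewrite g1 amul1.
Qed.
End LeftTensorMap.

(** * The polynomial algebra k[x,y] *)

Definition ix : 'I_2 := @Ordinal 2 0 isT.
Definition iy : 'I_2 := @Ordinal 2 1 isT.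

Lemma big_ord2 (R : Type) (idx : R) (op : Monoid.law idx) (F : 'I_2 -> R) :
  \big[op/idx]_(i < 2) F i = op (F ix) (F iy).
Proof.
rewrite big_ord_recl big_ord_recl big_ord0 Monoid.mulm1.
by congr (op (F _) (F _)); apply: val_inj.
Qed.

Lemma mpolyX2 (R : nzRingType) (m : 'X_{1..2}) :
  'X_[m] = 'X_ix ^+ m ix * 'X_iy ^+ m iy :> {mpoly R[2]}.
Proof. by rewrite mpolyXE_id big_ord2. Qed.

Lemma mdeg2 (m : 'X_{1..2}) : mdeg m = (m ix + m iy)%N.
Proof. by rewrite mdegE big_ord2. Qed.

Section AlgMapsFromPolynomials.
Variable k : fieldType.
Local Notation x := (xA k).
Local Notation y := (yA k).

Lemma alg_map_mpolyE (S : algType k) (F : Apoly k -> S) : alg_map F ->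
  forall p, F p = \sum_(m <- msupp p) p@_m *: (F x ^+ m ix * F y ^+ m iy).
Proof.
move=> HF p; have [Hl HM _] := HF.
rewrite {1}(mpolyE p) (lin_sum Hl); apply: eq_bigr => m _.
by rewrite (linZ Hl) mpolyX2 HM !(alg_mapX HF).
Qed.

Lemma alg_map_mpoly_eq (S : algType k) (F G : Apoly k -> S) : alg_map F -> alg_map G ->
  F x = G x -> F y = G y -> forall p, F p = G p.
Proof. by move=> HF HG Hx Hy p; rewrite (alg_map_mpolyE HF) (alg_map_mpolyE HG) Hx Hy. Qed.

Lemma alg_map_mpoly_exists (S : algType k) (u v : S) : u * v = v * u ->
  exists F : Apoly k -> S, [/\ alg_map F, F x = u & F y = v].
Proof.
move=> uv; pose F := mmap (GRing.in_alg S) (fun i : 'I_2 => if val i == 0%N then u else v).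
have Fl : lin F by move=> a p q; rewrite /F mmapD mmapZ /= mulr_algl.
have FX m : F 'X_[m] = u ^+ m ix * v ^+ m iy by rewrite /F mmapX /mmap1 big_ord2.
have FXM m m' : F ('X_[m] * 'X_[m']) = F 'X_[m] * F 'X_[m'].
  rewrite -mpolyXD !FX !mnmDE !exprD -!mulrA; congr (_ * _); rewrite !mulrA; congr (_ * _).
  by apply: commrX; apply/esym; apply: commrX.
have FXq m q : F ('X_[m] * q) = F 'X_[m] * F q.
  rewrite [q in LHS]mpolyE [q in RHS]mpolyE mulr_sumr !(lin_sum Fl) mulr_sumr.
  by apply: eq_bigr => m' _; rewrite -scalerAr !(linZ Fl) FXM scalerAr.
exists F; split.
- split=> // [p q|]; last by rewrite /F -[1]/(1%:MP) mmapC /= scale1r.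
  rewrite [p in LHS]mpolyE [p in RHS]mpolyE mulr_suml !(lin_sum Fl) mulr_suml.
  by apply: eq_bigr => m _; rewrite -scalerAl !(linZ Fl) FXq scalerAl.
- by rewrite /F /xA mmapX mmap1U.
- by rewrite /F /yA mmapX mmap1U.
Qed.
End AlgMapsFromPolynomials.

Definition mxx : 'X_{1..2} := (U_(ix) + U_(ix))%MM.
Definition mxy : 'X_{1..2} := (U_(ix) + U_(iy))%MM.
Definition myy : 'X_{1..2} := (U_(iy) + U_(iy))%MM.

Lemma quadratic_monomials_neq : [/\ mxy != mxx, myy != mxx & myy != mxy].
Proof.
by split; apply/eqP => /(congr1 (fun m : 'X_{1..2} => m iy)); rewrite !mnmDE !mnm1E.
Qed.

Lemma mpolyX_homog1 (k : fieldType) (i : 'I_2) : ('X_i : Apoly k) \is 1.-homog.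
Proof. by rewrite dhomogX; apply/eqP; exact: mdeg1. Qed.

Section TensorCoefficients.
Variables (k : fieldType) (H : algType k) (X : atensor H (Apoly k)).
Local Notation x := (xA k).
Local Notation y := (yA k).

Definition tcoef (m : 'X_{1..2}) : X -> H := tlift X (fun h q => q@_m *: h).

Lemma tcoef_bilin m : bilin (fun (h : H) (q : Apoly k) => q@_m *: h).
Proof.
split=> [q|h].
- exact: lin_scale.
- by move=> a q q'; rewrite mcoeffD mcoeffZ scalerDl scalerA.
Qed.

Lemma tcoef_lin m : lin (tcoef m). Proof. exact: (tlift_lin X (tcoef_bilin m)). Qed.

Lemma tcoefE m h q : tcoef m (amul X h q) = q@_m *: h.
Proof. exact: (tliftE X (tcoef_bilin m)). Qed.

Lemma tcoef_monomial m m' h : tcoef m (amul X h 'X_[m']) = (m' == m)%:R *: h.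
Proof. by rewrite tcoefE mcoeffX. Qed.

Lemma linear_tensor_inj (p q p' q' : H) :
  amul X p x + amul X q y = amul X p' x + amul X q' y -> p = p' /\ q = q'.
Proof.
have E m r s : tcoef U_(m) (amul X r x + amul X s y) = (ix == m)%:R *: r + (iy == m)%:R *: s.
  by rewrite (linD (tcoef_lin _)) !tcoefE !mcoeffXU.
move=> h; split.
- by have := congr1 (tcoef U_(ix)) h; rewrite !E !scale1r !scale0r !addr0.
- by have := congr1 (tcoef U_(iy)) h; rewrite !E !scale1r !scale0r !add0r.
Qed.

Lemma quadratic_tensor_inj (p q r p' q' r' : H) :
  amul X p (x * x) + amul X q (x * y) + amul X r (y * y) =
  amul X p' (x * x) + amul X q' (x * y) + amul X r' (y * y) ->
  [/\ p = p', q = q' & r = r'].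
Proof.
have [n1 n2 n3] := quadratic_monomials_neq.
have E m s t u : tcoef m (amul X s (x * x) + amul X t (x * y) + amul X u (y * y)) =
    (mxx == m)%:R *: s + (mxy == m)%:R *: t + (myy == m)%:R *: u.
  by rewrite -!mpolyXD !(linD (tcoef_lin _)) !tcoef_monomial.
move=> h; split.
- have := congr1 (tcoef mxx) h.
  by rewrite !E eqxx (negbTE n1) (negbTE n2) !scale1r !scale0r !addr0.
- have := congr1 (tcoef mxy) h.
  by rewrite !E eqxx eq_sym (negbTE n1) (negbTE n3) !scale1r !scale0r !addr0 !add0r.
- have := congr1 (tcoef myy) h.
  by rewrite !E eqxx !(eq_sym _ myy) (negbTE n2) (negbTE n3) !scale1r !scale0r !add0r.
Qed.

Lemma homog1_decomp (q : Apoly k) : q \is 1.-homog -> q = q@_U_(ix) *: x + q@_U_(iy) *: y.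
Proof.
move=> hq; apply/mpolyP => m; rewrite mcoeffD !mcoeffZ /xA /yA !mcoeffX.
have [/eqP m1|m1] := eqVneq (mdeg m) 1%N.
- case/mdeg1P: m1 => i /eqP ->; rewrite !eq_mnm1.
  have [->|->] : i = ix \/ i = iy.
    by case: i => -[|[|//]] hi; [left|right]; apply: val_inj.
  + by rewrite eqxx mulr1 mulr0 addr0.
  + by rewrite eqxx mulr1 mulr0 add0r.
- have ne i : (U_(i)%MM == m) = false.
    by apply/negbTE; apply: contra m1 => /eqP <-; rewrite mdeg1.
  by rewrite (dhomog_nemf_coeff hq m1) !ne !mulr0 addr0.
Qed.

Definition tensor_homog (n : nat) (t : X) := exists s : seq (H * Apoly k),
  all (fun hp => hp.2 \is n.-homog) s /\ t = \sum_(hp <- s) amul X hp.1 hp.2.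

Lemma tensor_homog0 n : tensor_homog n 0.
Proof. by exists [::]; rewrite big_nil. Qed.

Lemma tensor_homogD n t t' : tensor_homog n t -> tensor_homog n t' -> tensor_homog n (t + t').
Proof.
case=> s [Hs ->] [s' [Hs' ->]]; exists (s ++ s').
by rewrite all_cat Hs Hs' big_cat.
Qed.

Lemma tensor_homogZ n a t : tensor_homog n t -> tensor_homog n (a *: t).
Proof.
case=> s [Hs ->]; exists [seq (a *: hp.1, hp.2) | hp <- s]; rewrite all_map; split=> //.
by rewrite big_map scaler_sumr; apply: eq_bigr => hp _; rewrite amulZl.
Qed.

Lemma tensor_homogM i j t t' :
  tensor_homog i t -> tensor_homog j t' -> tensor_homog (i + j) (t * t').
Proof.
case=> s [Hs ->] [s' [Hs' ->]].
exists [seq (z.1.1 * z.2.1, z.1.2 * z.2.2) | z <- [seq (hp, hq) | hp <- s, hq <- s']].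
split.
  rewrite all_map; apply/allP => z /allpairsP [[hp hq] [/= hin hin' ->]] /=.
  by apply: dhomogM; [exact: (allP Hs _ hin) | exact: (allP Hs' _ hin')].
rewrite big_map big_allpairs mulr_suml; apply: eq_bigr => hp _.
by rewrite mulr_sumr; apply: eq_bigr => hq _; rewrite amulM.
Qed.

Lemma tensor_homogX n t e : tensor_homog n t -> tensor_homog (n * e) (t ^+ e).
Proof.
move=> Ht; elim: e => [|e IH].
  by rewrite muln0 expr0; exists [:: (1, 1)]; rewrite /= dhomog1 big_seq1 amul1.
by rewrite exprS mulnS; apply: tensor_homogM.
Qed.

Lemma tensor_homog_sum (I : Type) (r : seq I) (F : I -> X) n :
  (forall i, tensor_homog n (F i)) -> tensor_homog n (\sum_(i <- r) F i).
Proof.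
move=> HF; elim: r => [|i r IH]; first by rewrite big_nil; exact: tensor_homog0.
by rewrite big_cons; apply: tensor_homogD.
Qed.

Lemma tensor_homog_linear (p q : H) : tensor_homog 1 (amul X p x + amul X q y).
Proof.
by exists [:: (p, x); (q, y)]; rewrite /= !mpolyX_homog1 big_cons big_seq1.
Qed.

Lemma tensor_homog1P (t : X) : tensor_homog 1 t -> exists p q, t = amul X p x + amul X q y.
Proof.
case=> s [Hs ->].
exists (\sum_(hp <- s) hp.2@_U_(ix) *: hp.1), (\sum_(hp <- s) hp.2@_U_(iy) *: hp.1).
rewrite (lin_sum (amul_lin_l X x)) (lin_sum (amul_lin_l X y)) -big_split /=.
apply: eq_big_seq => hp hin.
by rewrite {1}(homog1_decomp (allP Hs _ hin)) amulDr !amulZr !amulZl.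
Qed.

Lemma graded_coaction_linear (F : Apoly k -> X) : alg_map F ->
  tensor_homog 1 (F x) -> tensor_homog 1 (F y) -> graded_coaction F.
Proof.
move=> HF Hx Hy n p Hp; rewrite (alg_map_mpolyE HF).
apply: tensor_homog_sum => m; case: (boolP (m \in msupp p)) => [hm|/memN_msupp_eq0 ->].
  have <- : (1 * m ix + 1 * m iy)%N = n by rewrite !mul1n -mdeg2; exact: (dhomog_mf Hp hm).
  apply: tensor_homogZ.
  exact: (tensor_homogM (tensor_homogX _ Hx) (tensor_homogX _ Hy)).
by rewrite scale0r; exact: tensor_homog0.
Qed.

Lemma mul_linear_tensor (a b c d : H) :
  (amul X a x + amul X b y) * (amul X c x + amul X d y) =
  amul X (a * c) (x * x) + amul X (a * d + b * c) (x * y) + amul X (b * d) (y * y).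
Proof.
rewrite mulrDl !mulrDr -!amulM [y * x]mulrC amulDl.
by rewrite !addrA; congr (_ + _); rewrite -!addrA; congr (_ + _); rewrite addrC.
Qed.
End TensorCoefficients.
Arguments tcoef {k H} X m _.
Arguments tcoef_lin {k H} X m.
Arguments tcoefE {k H} X m h q.

(** * Coassociativity of a linear coaction *)

(* [{mpoly B[2]}] is only a B-module; this alias makes it a k-algebra. *)
Definition mpoly2 (k : fieldType) (B : algType k) := {mpoly B[2]}.
HB.instance Definition _ (k : fieldType) (B : algType k) := GRing.NzRing.on (mpoly2 B).

Section Mpoly2Lmodule.
Variables (k : fieldType) (B : algType k).
Definition mpoly2_scale (c : k) (z : mpoly2 B) : mpoly2 B := (c%:A : B) *: (z : {mpoly B[2]}).
Lemma mpoly2_scaleA a b v : mpoly2_scale a (mpoly2_scale b v) = mpoly2_scale (a * b) v.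
Proof. by rewrite /mpoly2_scale scalerA mulr_algl scalerA. Qed.
Lemma mpoly2_scale1 : left_id 1 mpoly2_scale.
Proof. by move=> v; rewrite /mpoly2_scale !scale1r. Qed.
Lemma mpoly2_scaleDr : right_distributive mpoly2_scale +%R.
Proof. by move=> a x y; rewrite /mpoly2_scale scalerDr. Qed.
Lemma mpoly2_scaleDl v : {morph mpoly2_scale^~ v: a b / a + b}.
Proof. by move=> a b; rewrite /mpoly2_scale !scalerDl. Qed.
End Mpoly2Lmodule.

HB.instance Definition _ (k : fieldType) (B : algType k) :=
  GRing.Zmodule_isLmodule.Build k (mpoly2 B)
    (@mpoly2_scaleA k B) (@mpoly2_scale1 k B) (@mpoly2_scaleDr k B) (@mpoly2_scaleDl k B).

Section Mpoly2Algebra.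
Variables (k : fieldType) (B : algType k).

Lemma mpoly2_scaleE (a : k) (u : mpoly2 B) : a *: u = (a%:A : B)%:MP * (u : {mpoly B[2]}).
Proof. by rewrite /GRing.scale /= /mpoly2_scale mul_mpolyC. Qed.

Lemma mpolyC_comm (c : B) (z : {mpoly B[2]}) : (forall m, c * z@_m = z@_m * c) ->
  c%:MP * z = z * c%:MP.
Proof.
move=> Hc; rewrite (mpolyE z) mulr_sumr mulr_suml; apply: eq_bigr => m _.
rewrite -!mul_mpolyC -mulrA -(commr_mpolyX m c%:MP) !mulrA; congr (_ * _).
by rewrite -!mpolyCM Hc.
Qed.

Lemma mpoly2_scaleAl (a : k) (u v : mpoly2 B) : a *: (u * v) = (a *: u) * v.
Proof. by rewrite /GRing.scale /= /mpoly2_scale scalerAl. Qed.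

Lemma mpoly2_scaleAr (a : k) (u v : mpoly2 B) : a *: (u * v) = u * (a *: v).
Proof.
rewrite !mpoly2_scaleE mulrA (@mpolyC_comm _ u) ?mulrA // => m.
by rewrite mulr_algl mulr_algr.
Qed.
End Mpoly2Algebra.

HB.instance Definition _ (k : fieldType) (B : algType k) :=
  GRing.Lmodule_isLalgebra.Build k (mpoly2 B) (@mpoly2_scaleAl k B).
HB.instance Definition _ (k : fieldType) (B : algType k) :=
  GRing.Lalgebra_isAlgebra.Build k (mpoly2 B) (@mpoly2_scaleAr k B).

Section ScalarExtension.
Variables (k : fieldType) (B : algType k).

Definition inalg_mpoly (q : Apoly k) : mpoly2 B := map_mpoly (GRing.in_alg B) q.

Lemma inalg_mpoly_alg : alg_map inalg_mpoly.
Proof.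
split=> [a p q|p q|]; rewrite /inalg_mpoly ?rmorph1 ?rmorphM //.
have -> : map_mpoly (GRing.in_alg B) (a *: p + q) =
    map_mpoly (GRing.in_alg B) (a *: p) + map_mpoly (GRing.in_alg B) q by exact: rmorphD.
by rewrite map_mpolyZ.
Qed.

Lemma inalg_mpoly_central (w : B) q :
  (w%:MP : mpoly2 B) * inalg_mpoly q = inalg_mpoly q * w%:MP.
Proof.
by apply: mpolyC_comm => m; rewrite mcoeff_map_mpoly /= mulr_algl mulr_algr.
Qed.

Lemma mpolyC_lin : lin (fun w : B => (w%:MP : mpoly2 B)).
Proof. by move=> a x y; rewrite mpolyCD mpoly2_scaleE -mpolyCM mulr_algl. Qed.
End ScalarExtension.

Lemma comul_lin (k : fieldType) (H : hopf k) : lin (@comul k H).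
Proof. by case: (comul_alg H). Qed.
Arguments comul_lin {k} H.

Section CoassociativityOnGenerators.
Variables (k : fieldType) (O : hopf k) (OA : atensor O (Apoly k)) (OOA : tensor3 O O (Apoly k)).
Local Notation B := (hHH O).
Local Notation Z := (mpoly2 (hHH O)).
Local Notation J := (@inalg_mpoly k B).

Definition embed3_tmul (u v : O) (q : Apoly k) : Z := (amul B u v)%:MP * J q.

Lemma embed3_trilin : trilin embed3_tmul.
Proof.
have [HJ _ _] := inalg_mpoly_alg B.
have HC := lin_comp (@mpolyC_lin k B) (lin_mulr _).
split=> [v q|u q|u v].
- exact: (lin_comp (amul_lin_l B v) (HC _)).
- exact: (lin_comp (amul_lin_r B u) (HC _)).
- exact: (lin_comp HJ (lin_mull _)).
Qed.

Definition embed3 : OOA -> Z := tlift3 OOA embed3_tmul.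

Lemma embed3_lin : lin embed3. Proof. exact: (tlift3_lin OOA embed3_trilin). Qed.
Lemma embed3E u v q : embed3 (tmul3 OOA u v q) = (amul B u v)%:MP * J q.
Proof. exact: (tlift3E OOA embed3_trilin). Qed.

Definition tmul3_monomial (m : 'X_{1..2}) : B -> OOA :=
  tlift B (fun u v => tmul3 OOA u v 'X_[m]).
Lemma tmul3_monomial_lin m : lin (tmul3_monomial m).
Proof. exact: (tlift_lin B (tmul3_bilin12 OOA _)). Qed.
Lemma tmul3_monomialE m u v : tmul3_monomial m (amul B u v) = tmul3 OOA u v 'X_[m].
Proof. exact: (tliftE B (tmul3_bilin12 OOA _)). Qed.

Definition unembed3 (z : Z) : OOA := \sum_(m <- msupp z) tmul3_monomial m z@_m.

Lemma unembed3_bounded (z : Z) i : (msize z <= i)%N ->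
  unembed3 z = \sum_(m : 'X_{1..2 < i}) tmul3_monomial m z@_m.
Proof.
move=> le_zi; rewrite /unembed3 (big_mksub 'X_{1..2 < i}) ?msupp_uniq //=; first last.
  by move=> m /msize_mdeg_lt /leq_trans; apply.
rewrite big_rmcond //= => m /memN_msupp_eq0 ->.
exact: (lin0 (tmul3_monomial_lin _)).
Qed.

Lemma unembed3_lin : lin unembed3.
Proof.
move=> a p q; set i := maxn (msize p) (msize q).
have hp : (msize p <= i)%N by rewrite leq_maxl.
have hq : (msize q <= i)%N by rewrite leq_maxr.
have hpq : (msize (a *: p + q) <= i)%N.
  apply: leq_trans (msizeD_le _ _) _; rewrite geq_max hq andbT.
  by rewrite mpoly2_scaleE mul_mpolyC; exact: leq_trans (msizeZ_le _ _) hp.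
rewrite (unembed3_bounded hp) (unembed3_bounded hq) (unembed3_bounded hpq).
rewrite scaler_sumr -big_split /=; apply: eq_bigr => m _.
rewrite mcoeffD mpoly2_scaleE mcoeffCM mulr_algl.
by rewrite (linD (tmul3_monomial_lin _)) (linZ (tmul3_monomial_lin _)).
Qed.

Lemma embed3K : cancel embed3 unembed3.
Proof.
apply: (tmul3_uniq (l1 := fun t => unembed3 (embed3 t)) (l2 := id)).
- exact: (lin_comp embed3_lin unembed3_lin).
- exact: lin_id.
move=> u v q; rewrite embed3E.
set z : Z := _ * _; set i := maxn (msize z) (msize q).
have hz : (msize z <= i)%N by rewrite leq_maxl.
have hq : (msize q <= i)%N by rewrite leq_maxr.
rewrite (unembed3_bounded hz) {1}(mpolywE hq) (lin_sum ((tmul3_bilin23 OOA u).2 v)).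
apply: eq_bigr => m _.
rewrite /z mcoeffCM mcoeff_map_mpoly /= mulr_algr (linZ (tmul3_monomial_lin _)).
by rewrite tmul3_monomialE (linZ ((tmul3_bilin23 OOA u).2 v)).
Qed.

Lemma embed3_coL h q :
  embed3 (coL OA B OOA (@comul k O) (amul OA h q)) = ((comul h)%:MP : Z) * J q.
Proof.
rewrite (coLE OA B OOA (comul_lin O)); move: (comul h); apply: (tensor_ext B).
- exact: (lin_comp (tlift_lin B (tmul3_bilin12 OOA q)) embed3_lin).
- exact: (lin_comp (@mpolyC_lin k B) (lin_mulr _)).
- by move=> u v; rewrite (tliftE B (tmul3_bilin12 OOA q)) embed3E.
Qed.

Lemma embed_right_bilin : bilin (fun (u : O) (q : Apoly k) => (amul B 1 u)%:MP * J q : Z).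
Proof. by case: embed3_trilin => _ H2 H3; split=> [q|u]; [exact: H2 | exact: H3]. Qed.

Definition embed_right : OA -> Z := tlift OA (fun u q => (amul B 1 u)%:MP * J q : Z).

Lemma embed_right_lin : lin embed_right. Proof. exact: (tlift_lin OA embed_right_bilin). Qed.
Lemma embed_rightE u q : embed_right (amul OA u q) = (amul B 1 u)%:MP * J q.
Proof. exact: (tliftAE OA embed_right_bilin). Qed.

Lemma embed_right_alg : alg_map embed_right.
Proof.
have [_ JM J1] := inalg_mpoly_alg B.
apply: tlift_alg; first exact: embed_right_bilin.
- move=> v v' w w'.
  have -> : amul B 1 (v * v') = amul B 1 v * amul B 1 v' by rewrite -amulM mul1r.
  by rewrite JM mpolyCM -!mulrA; congr (_ * _); rewrite !mulrA inalg_mpoly_central.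
- by rewrite amul1 J1 mulr1 mpolyC1.
Qed.

Lemma embed_right_central h t :
  ((amul B h 1)%:MP : Z) * embed_right t = embed_right t * (amul B h 1)%:MP.
Proof.
move: t; apply: (atensor_ext OA).
- exact: (lin_comp embed_right_lin (lin_mull _)).
- exact: (lin_comp embed_right_lin (lin_mulr _)).
move=> u q; rewrite !embed_rightE -mulrA -inalg_mpoly_central !mulrA -!mpolyCM -!amulM.
by rewrite !mulr1 !mul1r.
Qed.

Lemma embed3_coR (f : Apoly k -> OA) (Hf : lin f) h q :
  embed3 (coR OA OOA f (amul OA h q)) = ((amul B h 1)%:MP : Z) * embed_right (f q).
Proof.
rewrite (coRE OA OOA Hf); move: (f q); apply: (atensor_ext OA).
- exact: (lin_comp (tlift_lin OA (tmul3_bilin23 OOA h)) embed3_lin).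
- exact: (lin_comp embed_right_lin (lin_mull _)).
move=> u w; rewrite (tliftAE OA (tmul3_bilin23 OOA h)) embed3E embed_rightE.
by rewrite mulrA -mpolyCM -amulM mulr1 mul1r.
Qed.

Lemma coassoc_of_generators (dA : Apoly k -> OA) : alg_map dA ->
  coL OA B OOA (@comul k O) (dA (xA k)) = coR OA OOA dA (dA (xA k)) ->
  coL OA B OOA (@comul k O) (dA (yA k)) = coR OA OOA dA (dA (yA k)) ->
  forall p, coL OA B OOA (@comul k O) (dA p) = coR OA OOA dA (dA p).
Proof.
move=> HdA Hx Hy p; have [dAl dAM dA1] := HdA.
have [_ CM C1] := comul_alg O; have [_ JM J1] := inalg_mpoly_alg B.
pose L t := embed3 (coL OA B OOA (@comul k O) t).
pose R t := embed3 (coR OA OOA dA t).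
have L_alg : alg_map L.
  have Ll : lin L := lin_comp (coL_lin OA B OOA (comul_lin O)) embed3_lin.
  split=> //; last by rewrite -(amul1 OA) /L embed3_coL C1 J1 mulr1; exact: mpolyC1.
  apply: (lin_multiplicative Ll embed3_coL) => v v' w w'.
  by rewrite CM JM mpolyCM -!mulrA; congr (_ * _); rewrite !mulrA inalg_mpoly_central.
have R_alg : alg_map R.
  have Rl : lin R := lin_comp (coR_lin OA OOA dAl) embed3_lin.
  split=> //; last first.
    rewrite -(amul1 OA) /R (embed3_coR dAl).
    rewrite [dA _]dA1 -(amul1 OA) embed_rightE J1 !mulr1 (amul1 B) -mpolyCM mulr1.
    exact: mpolyC1.
  apply: (lin_multiplicative Rl (embed3_coR dAl)) => v v' w w'.
  have [_ EM _] := embed_right_alg.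
  rewrite dAM EM -[1 : O]mulr1 amulM mpolyCM !mulr1 -!mulrA; congr (_ * _).
  by rewrite !mulrA embed_right_central.
rewrite -[LHS]embed3K -[RHS]embed3K; congr unembed3; move: p.
apply: alg_map_mpoly_eq; [exact: alg_map_comp HdA L_alg | exact: alg_map_comp HdA R_alg | |].
- by rewrite /L /R Hx.
- by rewrite /L /R Hy.
Qed.
End CoassociativityOnGenerators.

Section CoassociativityOfLinearCoaction.
Variables (k : fieldType) (O : hopf k) (OA : atensor O (Apoly k)) (OOA : tensor3 O O (Apoly k)).
Variables (dA : Apoly k -> OA) (a b c d : O).
Local Notation B := (hHH O).
Local Notation x := (xA k).
Local Notation y := (yA k).
Hypotheses (dAl : lin dA) (dAx : dA x = amul OA a x + amul OA b y)
  (dAy : dA y = amul OA c x + amul OA d y).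

Lemma coassoc_linear_row (p q : O) :
  comul p = amul B p a + amul B q c -> comul q = amul B p b + amul B q d ->
  coL OA B OOA (@comul k O) (amul OA p x + amul OA q y) =
  coR OA OOA dA (amul OA p x + amul OA q y).
Proof.
move=> Cp Cq; have LE := coLE OA B OOA (comul_lin O); have RE := coRE OA OOA dAl.
have T12 w := tlift_lin B (tmul3_bilin12 OOA w).
have T23 h := tlift_lin OA (tmul3_bilin23 OOA h).
rewrite (linD (coL_lin OA B OOA (comul_lin O))) (linD (coR_lin OA OOA dAl)).
rewrite !LE !RE Cp Cq dAx dAy !(linD (T12 _)) !(linD (T23 _)).
rewrite !(tliftAE B (tmul3_bilin12 OOA _)) !(tliftAE OA (tmul3_bilin23 OOA _)).
by rewrite -!addrA; congr (_ + _); rewrite !addrA; congr (_ + _); rewrite addrC.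
Qed.
End CoassociativityOfLinearCoaction.

(** * Hopf algebras and the quantum determinant *)

Lemma subr_eq_swap (V : zmodType) (x y z w : V) : x - y = z - w <-> x + w = z + y.
Proof.
split=> h; first by rewrite -[x](subrK y) h addrAC subrK.
by apply/eqP; rewrite subr_eq addrAC -h addrK.
Qed.

(* [e] times the adjugate is a left inverse of [[a, b]; [c, d]], hence equals
   the right inverse [S]. *)
Lemma manin_right_inverse (R : nzRingType) (a b c d e Sa Sb Sc Sd : R) :
  a * c = c * a -> b * d = d * b ->
  e * (a * d - c * b) = 1 -> e * (d * a - b * c) = 1 ->
  a * Sa + b * Sc = 1 -> a * Sb + b * Sd = 0 -> c * Sa + d * Sc = 0 -> c * Sb + d * Sd = 1 ->
  [/\ Sa = e * d, Sb = - (e * b), Sc = - (e * c) & Sd = e * a].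
Proof.
move=> ac bd D1 D2 R1 R2 R3 R4.
have left_inv n1 n2 (s t : R) : (n1 * a + n2 * c) * s + (n1 * b + n2 * d) * t =
    n1 * (a * s + b * t) + n2 * (c * s + d * t).
  by rewrite !mulrDl !mulrDr !mulrA addrACA.
have F1 : e * d * a + - (e * b) * c = 1 by rewrite mulNr -!mulrA -mulrBr.
have F2 : e * d * b + - (e * b) * d = 0 by rewrite mulNr -!mulrA -mulrBr bd subrr mulr0.
have F3 : - (e * c) * a + e * a * c = 0.
  by rewrite mulNr addrC -!mulrA -mulrBr ac subrr mulr0.
have F4 : - (e * c) * b + e * a * d = 1 by rewrite mulNr addrC -!mulrA -mulrBr.
split.
- have := left_inv (e * d) (- (e * b)) Sa Sc.
  by rewrite F1 F2 R1 R3 mul1r mul0r addr0 mulr1 mulr0 addr0.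
- have := left_inv (e * d) (- (e * b)) Sb Sd.
  by rewrite F1 F2 R2 R4 mul1r mul0r addr0 mulr1 mulr0 add0r.
- have := left_inv (- (e * c)) (e * a) Sa Sc.
  by rewrite F3 F4 R1 R3 mul1r mul0r add0r mulr1 mulr0 addr0.
- have := left_inv (- (e * c)) (e * a) Sb Sd.
  by rewrite F3 F4 R2 R4 mul1r mul0r add0r mulr1 mulr0 add0r.
Qed.

Section HopfAlgebra.
Variables (k : fieldType) (H : hopf k).
Local Notation HH := (hHH H).
Local Notation S := (@antipode k H).

Lemma counit_alg : alg_map (fun h : H => (counit h : k^o)).
Proof. by split=> [a u v|u v|]; rewrite ?counit_lin ?counitM ?counit1. Qed.

Lemma antipode_mulr_bilin : bilin (fun u v : H => u * S v).
Proof.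
split=> [v|u]; first exact: lin_mulr.
exact: (lin_comp (@antipode_lin k H) (lin_mull u)).
Qed.

Lemma antipode_mull_bilin : bilin (fun u v : H => S u * v).
Proof.
split=> [v|u]; last exact: lin_mull.
exact: (lin_comp (@antipode_lin k H) (lin_mulr v)).
Qed.

Lemma mul_antipode_sum2 (h p q r s : H) : comul h = amul HH p q + amul HH r s ->
  p * S q + r * S s = (counit h)%:A.
Proof.
move=> Ch; rewrite -antipodeR Ch (linD (tlift_lin _ antipode_mulr_bilin)).
by rewrite !(tliftAE _ antipode_mulr_bilin).
Qed.

Lemma grouplike_antipode (g : H) : comul g = amul HH g g -> counit g = 1 ->
  S g * g = 1 /\ g * S g = 1.
Proof.
move=> Cg Eg; split.
- by rewrite -[RHS]scale1r -Eg -antipodeL Cg (tliftAE _ antipode_mull_bilin).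
- by rewrite -[RHS]scale1r -Eg -antipodeR Cg (tliftAE _ antipode_mulr_bilin).
Qed.

Lemma counit_scale_bilin (A : lmodType k) : bilin (fun (h : H) (q : A) => counit h *: q).
Proof.
split=> [q a u v|h]; last exact: lin_scale.
by rewrite counit_lin scalerDl scalerA.
Qed.

Lemma counit_scale_alg (A : algType k) (X : atensor H A) :
  alg_map (tlift X (fun (h : H) (q : A) => counit h *: q)).
Proof.
apply: tlift_alg; first exact: counit_scale_bilin.
- by move=> v v' w w'; rewrite counitM -scalerAl -scalerAr scalerA.
- by rewrite counit1 scale1r.
Qed.
End HopfAlgebra.
Arguments counit_scale_bilin {k} H A.

Section QuantumDeterminant.
Variables (k : fieldType) (H : hopf k) (a b c d : H).
Local Notation HH := (hHH H).
Local Notation S := (@antipode k H).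
Hypotheses (Ca : comul a = amul HH a a + amul HH b c) (Cb : comul b = amul HH a b + amul HH b d)
  (Cc : comul c = amul HH c a + amul HH d c) (Cd : comul d = amul HH c b + amul HH d d).
Hypotheses (Ea : counit a = 1) (Eb : counit b = 0) (Ec : counit c = 0) (Ed : counit d = 1).
Hypotheses (ac : a * c = c * a) (bd : b * d = d * b) (manin : a * d - c * b = d * a - b * c).

Definition qdet := a * d - c * b.

Lemma comul_qdet : comul qdet = amul HH qdet qdet.
Proof.
have [_ CM _] := comul_alg H.
have cancel2 (P1 P2 P3 P4 Q2 Q3 : HH) :
    (P1 + P2 + (P3 + P4)) - (P1 + Q2 + (Q3 + P4)) = (P2 - Q2) - (Q3 - P3).
  rewrite opprB opprD (opprD P1) (opprD Q3) addrACA (addrACA P1 P2) (addrACA P3 P4).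
  by rewrite !subrr add0r addr0.
rewrite /qdet (linB (comul_lin H)) !CM Ca Cb Cc Cd !mulrDl !mulrDr -!amulM -ac -bd.
by rewrite cancel2 -!amulBl -manin -amulBr.
Qed.

Lemma counit_qdet : counit qdet = 1.
Proof.
have [El _ _] := counit_alg H.
by rewrite /qdet (linB El) !counitM Ea Eb Ec Ed mul1r mul0r subr0.
Qed.

Lemma qdet_invertible : S qdet * qdet = 1 /\ qdet * S qdet = 1.
Proof. exact: (grouplike_antipode comul_qdet counit_qdet). Qed.

Lemma onc_rel_qdet : onc_rel a b c d qdet (S qdet).
Proof.
have [SDD DSD] := qdet_invertible.
have R1 := mul_antipode_sum2 Ca; have R2 := mul_antipode_sum2 Cb.
have R3 := mul_antipode_sum2 Cc; have R4 := mul_antipode_sum2 Cd.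
rewrite Ea Eb Ec Ed scale1r scale0r in R1 R2 R3 R4.
have D2 : S qdet * (d * a - b * c) = 1 by rewrite -manin.
have [Sa Sb Sc Sd] := manin_right_inverse ac bd SDD D2 R1 R2 R3 R4.
rewrite Sa Sb Sc Sd !mulrN !mulrA in R1 R2 R3 R4.
split=> //; split=> //.
- by rewrite addrC in R4.
- by apply/eqP; rewrite -subr_eq0 -R2 addrC.
- by apply/eqP; rewrite -subr_eq0 -R3.
Qed.
End QuantumDeterminant.

Section BialgebraMorphism.
Variables (k : fieldType) (O H : hopf k) (g : O -> H).
Hypothesis Hg : alg_map g.
Local Notation OO := (hHH O).
Local Notation HH := (hHH H).
Local Notation OOO := (hHHH O).
Local Notation SO := (@antipode k O).
Local Notation SH := (@antipode k H).

Let gl : lin g. Proof. by case: Hg. Qed.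
Let gM u v : g (u * v) = g u * g v. Proof. by case: Hg. Qed.
Let SHg_lin : lin (fun u => SH (g u)). Proof. exact: (lin_comp gl (@antipode_lin k H)). Qed.
Let gSO_lin : lin (fun w => g (SO w)). Proof. exact: (lin_comp (@antipode_lin k O) gl). Qed.

Lemma tmap_bilin : bilin (fun v w : O => amul HH (g v) (g w)).
Proof.
split=> [w|v]; [exact: (lin_comp gl (amul_lin_l HH (g w))) |
                exact: (lin_comp gl (amul_lin_r HH (g v)))].
Qed.

Lemma tmap_alg : alg_map (tmap OO HH g g).
Proof.
have [_ _ g1] := Hg.
rewrite tmap_amulE; apply: tlift_alg; first exact: tmap_bilin.
- by move=> v v' w w'; rewrite !gM amulM.
- by rewrite g1 amul1.
Qed.

Lemma tmapE u v : tmap OO HH g g (amul OO u v) = amul HH (g u) (g v).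
Proof. exact: (tliftAE OO tmap_bilin). Qed.

Hypothesis Hcomul : forall h, comul (g h) = tmap OO HH g g (comul h).
Hypothesis Hcounit : forall h, counit (g h) = counit h.

Lemma antipode_sandwich_trilin : trilin (fun u v w : O => SH (g u) * g v * g (SO w)).
Proof.
split=> [v w|u w|u v].
- exact: (lin_comp SHg_lin (lin_comp (lin_mulr (g v)) (lin_mulr (g (SO w))))).
- exact: (lin_comp gl (lin_comp (lin_mull (SH (g u))) (lin_mulr (g (SO w))))).
- exact: (lin_comp gSO_lin (lin_mull _)).
Qed.

Definition antipode_sandwich : OOO -> H :=
  tlift3 OOO (fun u v w => SH (g u) * g v * g (SO w)).

Lemma antipode_sandwichE u v w :
  antipode_sandwich (tmul3 OOO u v w) = SH (g u) * g v * g (SO w).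
Proof. exact: (tlift3E OOO antipode_sandwich_trilin). Qed.

Lemma antipode_sandwich_lin : lin antipode_sandwich.
Proof. exact: (tlift3_lin OOO antipode_sandwich_trilin). Qed.

Lemma antipode_comp_mull_bilin : bilin (fun u v : O => SH (g u) * g v).
Proof.
by split=> [v|u]; [exact: (lin_comp SHg_lin (lin_mulr _)) | exact: (lin_comp gl (lin_mull _))].
Qed.

Lemma antipode_comp_mulr_bilin : bilin (fun v w : O => g v * g (SO w)).
Proof.
by split=> [w|v]; [exact: (lin_comp gl (lin_mulr _)) | exact: (lin_comp gSO_lin (lin_mull _))].
Qed.

Lemma antipode_comp_mull_comul p :
  tlift OO (fun u v => SH (g u) * g v) (comul p) = (counit p)%:A.
Proof.
rewrite -Hcounit -antipodeL Hcomul; move: (comul p); apply: (tensor_ext OO).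
- exact: (tlift_lin OO antipode_comp_mull_bilin).
- exact: (lin_comp (tlift_lin OO tmap_bilin) (tlift_lin HH (antipode_mull_bilin H))).
- move=> u v; rewrite (tliftE OO antipode_comp_mull_bilin) tmapE.
  by rewrite (tliftAE HH (antipode_mull_bilin H)).
Qed.

Lemma antipode_comp_mulr_comul p :
  tlift OO (fun v w => g v * g (SO w)) (comul p) = (counit p)%:A.
Proof.
have [_ _ g1] := Hg.
transitivity (g (counit p)%:A); last by rewrite (linZ gl) g1.
rewrite -antipodeR; move: (comul p); apply: (tensor_ext OO).
- exact: (tlift_lin OO antipode_comp_mulr_bilin).
- exact: (lin_comp (tlift_lin OO (antipode_mulr_bilin O)) gl).
- move=> v w; rewrite (tliftE OO antipode_comp_mulr_bilin).
  by rewrite (tliftAE OO (antipode_mulr_bilin O)) gM.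
Qed.

Lemma counit_scale_bilin_r : bilin (fun (u : O) (q : O) => counit q *: u).
Proof.
split=> [q|u a v w]; first exact: lin_scale.
by rewrite counit_lin scalerDl scalerA.
Qed.

Lemma antipode_sandwich_coL t : antipode_sandwich (coL OO OO OOO (@comul k O) t) =
  g (SO (tlift OO (fun p w => counit p *: w) t)).
Proof.
move: t; apply: (tensor_ext OO).
- exact: (lin_comp (coL_lin OO OO OOO (comul_lin O)) antipode_sandwich_lin).
- exact: (lin_comp (tlift_lin OO (counit_scale_bilin O O)) gSO_lin).
move=> p w; rewrite (coLE OO OO OOO (comul_lin O)) (tliftAE OO (counit_scale_bilin O O)).
rewrite (linZ gSO_lin) -mulr_algl -antipode_comp_mull_comul; move: (comul p).
apply: (tensor_ext OO).
- exact: (lin_comp (tlift_lin OO (tmul3_bilin12 OOO w)) antipode_sandwich_lin).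
- exact: (lin_comp (tlift_lin OO antipode_comp_mull_bilin) (lin_mulr _)).
move=> u v; rewrite (tliftE OO (tmul3_bilin12 OOO w)) antipode_sandwichE.
by rewrite (tliftE OO antipode_comp_mull_bilin).
Qed.

Lemma antipode_sandwich_coR t : antipode_sandwich (coR OO OOO (@comul k O) t) =
  SH (g (tlift OO (fun u q => counit q *: u) t)).
Proof.
move: t; apply: (tensor_ext OO).
- exact: (lin_comp (coR_lin OO OOO (comul_lin O)) antipode_sandwich_lin).
- exact: (lin_comp (tlift_lin OO counit_scale_bilin_r) SHg_lin).
move=> u q; rewrite (coRE OO OOO (comul_lin O)) (tliftAE OO counit_scale_bilin_r).
rewrite (linZ SHg_lin) -mulr_algr -antipode_comp_mulr_comul; move: (comul q).
apply: (tensor_ext OO).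
- exact: (lin_comp (tlift_lin OO (tmul3_bilin23 OOO u)) antipode_sandwich_lin).
- exact: (lin_comp (tlift_lin OO antipode_comp_mulr_bilin) (lin_mull _)).
move=> v w; rewrite (tliftE OO (tmul3_bilin23 OOO u)) antipode_sandwichE.
by rewrite (tliftE OO antipode_comp_mulr_bilin) mulrA.
Qed.

(* Evaluate [u (x) v (x) w |-> S(g u) g(v) g(S w)] on both sides of
   coassociativity: the convolution identities collapse it to [g (S h)]
   and to [S (g h)] respectively. *)
Lemma antipode_morph h : SH (g h) = g (SO h).
Proof.
have := congr1 antipode_sandwich (comul_coassoc h).
by rewrite antipode_sandwich_coL antipode_sandwich_coR counitL counitR.
Qed.
End BialgebraMorphism.

(** * The universal property of O_nc(GL_2) *)

Section LinearCoaction.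
Variables (k : fieldType) (H : hopf k) (HA : atensor H (Apoly k)) (HHA : tensor3 H H (Apoly k)).
Variables (f : Apoly k -> HA) (a b c d : H).
Local Notation x := (xA k).
Local Notation y := (yA k).
Local Notation HH := (hHH H).
Hypotheses (fx : f x = amul HA a x + amul HA b y) (fy : f y = amul HA c x + amul HA d y).

Lemma linear_coaction_commute : alg_map f ->
  [/\ a * c = c * a, b * d = d * b & a * d + b * c = c * b + d * a].
Proof.
case=> _ fM _; have := congr1 f (mulrC x y).
by rewrite !fM fx fy !mul_linear_tensor => /quadratic_tensor_inj [].
Qed.

Lemma linear_coaction_counit :
  (forall p, tlift HA (fun h q => counit h *: q) (f p) = p) ->
  [/\ counit a = 1, counit b = 0, counit c = 0 & counit d = 1].
Proof.
move=> fE; have E p q r s :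
    tlift HA (fun h w => counit h *: w) (amul HA p q + amul HA r s) = counit p *: q + counit r *: s.
  by rewrite (linD (tlift_lin HA (counit_scale_bilin _ _))) !(tliftAE HA (counit_scale_bilin _ _)).
have := fE x; have := fE y; rewrite fx fy !E => ey ex.
have := congr1 (mcoeff U_(ix)) ex; have := congr1 (mcoeff U_(iy)) ex.
have := congr1 (mcoeff U_(ix)) ey; have := congr1 (mcoeff U_(iy)) ey.
rewrite !mcoeffD !mcoeffZ !mcoeffXU /= !mulr1 !mulr0 ?addr0 ?add0r.
by move=> -> -> -> ->.
Qed.

Definition tcoef3 (m : 'X_{1..2}) : HHA -> HH := tlift3 HHA (fun u v q => q@_m *: amul HH u v).

Lemma tcoef3_trilin m : trilin (fun (u v : H) (q : Apoly k) => q@_m *: amul HH u v).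
Proof.
split=> [v q|u q|u v].
- exact: (lin_comp (amul_lin_l HH v) (lin_scale _)).
- exact: (lin_comp (amul_lin_r HH u) (lin_scale _)).
- by move=> a' q q'; rewrite mcoeffD mcoeffZ scalerDl scalerA.
Qed.

Lemma tcoef3_lin m : lin (tcoef3 m). Proof. exact: (tlift3_lin HHA (tcoef3_trilin m)). Qed.
Lemma tcoef3E m u v q : tcoef3 m (tmul3 HHA u v q) = q@_m *: amul HH u v.
Proof. exact: (tlift3E HHA (tcoef3_trilin m)). Qed.

Lemma tcoef3_coL m h q : tcoef3 m (coL HA HH HHA (@comul k H) (amul HA h q)) = q@_m *: comul h.
Proof.
rewrite (coLE HA HH HHA (comul_lin H)); move: (comul h); apply: (tensor_ext HH).
- exact: (lin_comp (tlift_lin HH (tmul3_bilin12 HHA q)) (tcoef3_lin m)).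
- exact: lin_scale.
- by move=> u v; rewrite (tliftE HH (tmul3_bilin12 HHA q)) tcoef3E.
Qed.

Lemma tcoef3_coR m h q (fl : lin f) :
  tcoef3 m (coR HA HHA f (amul HA h q)) = amul HH h (tcoef HA m (f q)).
Proof.
rewrite (coRE HA HHA fl); move: (f q); apply: (atensor_ext HA).
- exact: (lin_comp (tlift_lin HA (tmul3_bilin23 HHA h)) (tcoef3_lin m)).
- exact: (lin_comp (tcoef_lin HA m) (amul_lin_r HH h)).
- by move=> u w; rewrite (tliftAE HA (tmul3_bilin23 HHA h)) tcoef3E tcoefE amulZr.
Qed.

(* Comparing the coefficients of x and y in both sides of coassociativity. *)
Lemma linear_coaction_comul : comod_alg HHA f ->
  [/\ comul a = amul HH a a + amul HH b c, comul b = amul HH a b + amul HH b d,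
      comul c = amul HH c a + amul HH d c & comul d = amul HH c b + amul HH d d].
Proof.
case=> -[fl _ _] fC _.
have CL := linD (coL_lin HA HH HHA (comul_lin H)); have CR := linD (coR_lin HA HHA fl).
have TD := linD (tcoef3_lin _); have tD m p q := linD (tcoef_lin HA m) (amul HA p x) (amul HA q y).
have cx m := congr1 (tcoef3 m) (fC x); have cy m := congr1 (tcoef3 m) (fC y).
move: (cx U_(ix)%MM) (cx U_(iy)%MM) (cy U_(ix)%MM) (cy U_(iy)%MM).
rewrite fx fy !CL !CR !TD !tcoef3_coL !(tcoef3_coR _ _ _ fl) fx fy !tD !tcoefE !mcoeffXU /=.
by rewrite !scale1r !scale0r ?addr0 ?add0r => -> -> -> ->.
Qed.
End LinearCoaction.

Lemma onc_rel_map (k : fieldType) (R S : algType k) (phi : R -> S) (a b c d e e' : R) :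
  alg_map phi -> onc_rel a b c d e e' ->
  onc_rel (phi a) (phi b) (phi c) (phi d) (phi e) (phi e').
Proof.
case=> Hl HM H1 [[h1 h2] [h3 h4] [h5 h6] [h7 h8] [h9 h10]]; have pB := linB Hl.
by split; split; rewrite -?HM -?pB ?h1 ?h2 ?h3 ?h4 ?h5 ?h6 ?h7 ?h8 ?h9 ?h10 ?H1.
Qed.

Lemma onc_rel_commute (k : fieldType) (R : algType k) (a b c d e e' : R) :
  onc_rel a b c d e e' -> [/\ a * c = c * a, b * d = d * b & a * d + b * c = c * b + d * a].
Proof.
case=> [[ac bd] [De De'] _ _ _]; split=> //.
by rewrite [c * b + _]addrC; apply/subr_eq_swap; rewrite De De'.
Qed.

Section PresentedAlgebra.
Variables (k : fieldType) (O : algType k) (a b c d e e' : O).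
Hypothesis Hpres : presents a b c d e e'.

(* [e = ad - cb] and [e'] is its inverse, so [a, b, c, d] already generate. *)
Lemma presents_ext (R : algType k) (phi1 phi2 : O -> R) : alg_map phi1 -> alg_map phi2 ->
  phi1 a = phi2 a -> phi1 b = phi2 b -> phi1 c = phi2 c -> phi1 d = phi2 d ->
  forall o, phi1 o = phi2 o.
Proof.
move=> H1 H2 Ea Eb Ec Ed; have [Hrel /(_ R) Huniv] := Hpres.
have [_ /(_ phi1 phi2 H1 H2)] := Huniv _ _ _ _ _ _ (onc_rel_map H1 Hrel); apply.
have [[_ _] [De _] [ee' e'e] _ _] := Hrel.
have [l1 M1 one1] := H1; have [l2 M2 one2] := H2.
have Ee : phi1 e = phi2 e by rewrite -De (linB l1) (linB l2) !M1 !M2 Ea Eb Ec Ed.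
split=> //; split=> //.
by rewrite -[LHS]mulr1 -one2 -ee' M2 -Ee mulrA -M1 e'e one1 mul1r.
Qed.
End PresentedAlgebra.

Section OncCoaction.
Variables (k : fieldType) (O : hopf k) (a b c d e e' : O).
Hypotheses (Hpres : presents a b c d e e') (Hhopf : onc_hopf_data a b c d e e').
Variable OA : atensor O (Apoly k).
Local Notation x := (xA k).
Local Notation y := (yA k).

Lemma onc_coaction_exists : exists dA : Apoly k -> OA, alg_map dA /\
  dA x = amul OA a x + amul OA b y /\ dA y = amul OA c x + amul OA d y.
Proof.
have [ac bd adbc] := onc_rel_commute Hpres.1.
have [|dA [HdA Hx Hy]] :=
  alg_map_mpoly_exists (u := amul OA a x + amul OA b y) (v := amul OA c x + amul OA d y).
  by rewrite !mul_linear_tensor ac bd adbc.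
by exists dA.
Qed.

Variables (OOA : tensor3 O O (Apoly k)) (dA : Apoly k -> OA).
Hypotheses (HdA : alg_map dA) (Hx : dA x = amul OA a x + amul OA b y)
  (Hy : dA y = amul OA c x + amul OA d y).

Lemma onc_coaction_comod : comod_alg OOA dA.
Proof.
have [[Ca Cb Cc Cd _] [Ea Ed _ _ [Eb Ec]] _] := Hhopf.
have [dAl _ _] := HdA; split=> //.
  apply: coassoc_of_generators; rewrite // ?Hx ?Hy.
  - exact: (coassoc_linear_row OOA dAl Hx Hy Ca Cb).
  - exact: (coassoc_linear_row OOA dAl Hx Hy Cc Cd).
have E := linD (tlift_lin OA (counit_scale_bilin O (Apoly k))).
have EA := tliftAE OA (counit_scale_bilin O (Apoly k)).
move=> p; have := alg_map_mpoly_eq (alg_map_comp HdA (counit_scale_alg OA)) (alg_map_id _).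
apply.
- by rewrite Hx E !EA Ea Eb scale1r scale0r addr0.
- by rewrite Hy E !EA Ec Ed scale1r scale0r add0r.
Qed.

Lemma onc_coaction_graded : graded_coaction dA.
Proof. by apply: graded_coaction_linear; rewrite // ?Hx ?Hy; apply: tensor_homog_linear. Qed.

Section Universality.
Variables (H : hopf k) (HA : atensor H (Apoly k)) (f : Apoly k -> HA).

Lemma onc_coaction_morph_unique (g1 g2 : O -> H) : alg_map g1 -> alg_map g2 ->
  (forall p, tmap OA HA g1 id (dA p) = f p) -> (forall p, tmap OA HA g2 id (dA p) = f p) ->
  forall o, g1 o = g2 o.
Proof.
move=> Hg1 Hg2 Hg1f Hg2f.
have Ex := etrans (Hg1f x) (esym (Hg2f x)); have Ey := etrans (Hg1f y) (esym (Hg2f y)).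
have T g (Hg : alg_map g) p q :
    tmap OA HA g id (amul OA p x + amul OA q y) = amul HA (g p) x + amul HA (g q) y.
  by have [Tl _ _] := tmap_left_alg OA HA Hg; rewrite (linD Tl) !(tmap_leftE OA HA Hg).
rewrite Hx (T _ Hg1) (T _ Hg2) in Ex; rewrite Hy (T _ Hg1) (T _ Hg2) in Ey.
have [Ea Eb] := linear_tensor_inj Ex; have [Ec Ed] := linear_tensor_inj Ey.
by move=> o; apply: (presents_ext Hpres Hg1 Hg2 Ea Eb Ec Ed o).
Qed.

Variables (a1 b1 c1 d1 : H) (HHA : tensor3 H H (Apoly k)).
Hypotheses (Hf : comod_alg HHA f) (fx : f x = amul HA a1 x + amul HA b1 y)
  (fy : f y = amul HA c1 x + amul HA d1 y).

Lemma onc_lift_exists :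
  exists g : O -> H, alg_map g /\ [/\ g a = a1, g b = b1, g c = c1 & g d = d1].
Proof.
have [Hfalg _ HfE] := Hf.
have [Ca1 Cb1 Cc1 Cd1] := linear_coaction_comul fx fy Hf.
have [Ea1 Eb1 Ec1 Ed1] := linear_coaction_counit fx fy HfE.
have [ac1 bd1 adbc1] := linear_coaction_commute fx fy Hfalg.
have manin1 : a1 * d1 - c1 * b1 = d1 * a1 - b1 * c1.
  by apply/subr_eq_swap; rewrite adbc1 addrC.
have rel1 := onc_rel_qdet Ca1 Cb1 Cc1 Cd1 Ea1 Eb1 Ec1 Ed1 ac1 bd1 manin1.
have [[g [Hg [ga gb gc gd _]]] _] := Hpres.2 H _ _ _ _ _ _ rel1.
by exists g.
Qed.

Variable g : O -> H.
Hypotheses (Hg : alg_map g) (ga : g a = a1) (gb : g b = b1) (gc : g c = c1) (gd : g d = d1).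

Lemma onc_lift_hopf_morph : hopf_morph g.
Proof.
have [[Ca Cb Cc Cd _] [Ea Ed _ _ [Eb Ec]] _] := Hhopf.
have [Ca1 Cb1 Cc1 Cd1] := linear_coaction_comul fx fy Hf.
have [_ _ HfE] := Hf; have [Ea1 Eb1 Ec1 Ed1] := linear_coaction_counit fx fy HfE.
have [Tl _ _] := tmap_alg Hg; have T := tmapE Hg.
have Hcomul : forall h, comul (g h) = tmap (hHH O) (hHH H) g g (comul h).
  apply: (presents_ext Hpres (alg_map_comp Hg (comul_alg H))
                              (alg_map_comp (comul_alg O) (tmap_alg Hg))).
  - by rewrite /= ga Ca1 Ca (linD Tl) !T ga gb gc.
  - by rewrite /= gb Cb1 Cb (linD Tl) !T ga gb gd.
  - by rewrite /= gc Cc1 Cc (linD Tl) !T ga gc gd.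
  - by rewrite /= gd Cd1 Cd (linD Tl) !T gb gc gd.
have Hcounit : forall h, counit (g h) = counit h.
  apply: (presents_ext Hpres (alg_map_comp Hg (counit_alg H)) (counit_alg O)).
  - by rewrite /= ga Ea1 Ea.
  - by rewrite /= gb Eb1 Eb.
  - by rewrite /= gc Ec1 Ec.
  - by rewrite /= gd Ed1 Ed.
by split=> // h; rewrite (antipode_morph Hg Hcomul Hcounit).
Qed.

Lemma onc_lift_coaction p : tmap OA HA g id (dA p) = f p.
Proof.
have [Tl _ _] := tmap_left_alg OA HA Hg; have [Hfalg _ _] := Hf.
move: p; apply: (alg_map_mpoly_eq (alg_map_comp HdA (tmap_left_alg OA HA Hg)) Hfalg).
- by rewrite /= Hx (linD Tl) !(tmap_leftE OA HA Hg) ga gb fx.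
- by rewrite /= Hy (linD Tl) !(tmap_leftE OA HA Hg) gc gd fy.
Qed.
End Universality.
End OncCoaction.

Theorem mainTheorem13 (k : fieldType) (O : hopf k) (a b c d e e' : O)
  (Hpres : presents a b c d e e') (Hhopf : onc_hopf_data a b c d e e')
  (OA : atensor O (Apoly k)) (OOA : tensor3 O O (Apoly k)) :
  (exists dA : Apoly k -> OA, alg_map dA /\
     dA (xA k) = amul OA a (xA k) + amul OA b (yA k) /\
     dA (yA k) = amul OA c (xA k) + amul OA d (yA k)) /\
  (forall dA : Apoly k -> OA, alg_map dA ->
     dA (xA k) = amul OA a (xA k) + amul OA b (yA k) ->
     dA (yA k) = amul OA c (xA k) + amul OA d (yA k) ->
     [/\ comod_alg OOA dA, graded_coaction dA &
       forall (H : hopf k) (HA : atensor H (Apoly k)) (HHA : tensor3 H H (Apoly k))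
              (f : Apoly k -> HA),
         comod_alg HHA f -> graded_coaction f ->
         exists g : O -> H,
           [/\ hopf_morph g,
               forall p, tmap OA HA g id (dA p) = f p &
               forall g' : O -> H, hopf_morph g' ->
                 (forall p, tmap OA HA g' id (dA p) = f p) ->
                 forall o, g' o = g o]]).
Proof.
split=> [|dA HdA Hx Hy]; first exact: onc_coaction_exists Hpres OA.
split; [exact (onc_coaction_comod Hhopf OOA HdA Hx Hy) | exact (onc_coaction_graded HdA Hx Hy) |].
move=> H HA HHA f Hf Hgr.
have [a1 [b1 fx]] := tensor_homog1P (Hgr 1%N (xA k) (mpolyX_homog1 k ix)).
have [c1 [d1 fy]] := tensor_homog1P (Hgr 1%N (yA k) (mpolyX_homog1 k iy)).
have [g [Hg [ga gb gc gd]]] := onc_lift_exists Hpres Hf fx fy.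
have Hgf := onc_lift_coaction HdA Hx Hy Hf fx fy Hg ga gb gc gd.
exists g; split=> [||g' [Hg' _ _ _] Hg'f].
- exact (onc_lift_hopf_morph Hpres Hhopf Hf fx fy Hg ga gb gc gd).
- exact: Hgf.
- exact (onc_coaction_morph_unique Hpres Hx Hy Hg' Hg Hg'f Hgf).
Qed.
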